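(* For any optimal packing of a finite multiset of items into a finite sequence of bins, there is an optimal thrifty packing of those items into that sequence that uses the same set of bins.
   Context: Grid Scheduling setting: items have positive integer sizes; bins have positive integer sizes and form a sequence. A packing assigns every item to a bin such that the total size of items in each bin is at most the bin's size. A bin is used if it receives at least one item; the cost of a packing is the sum of the sizes of its used bins. A packing is valid if each empty bin is smaller than every item packed in a later bin. A packing is optimal if it is valid and has minimum cost among all valid packings of the same items into the same sequence. A bin is wasteful if its empty space is at least the size of some item packed in a later bin; a packing is thrifty if it has no wasteful bin. *)

From mathcomp Require Import all_boot.
Set Implicit Arguments. Unset Strict Implicit. Unset Printing Implicit Defensive.

(* Items: a finite multiset of m items, given as sizes s : 'I_m -> nat
   (item i has size s i).  Bins: a finite sequence of n bins, bin j has size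
   b j, ordered by the index j. *)

Section GridScheduling.
Variables (m n : nat) (s : 'I_m -> nat) (b : 'I_n -> nat).

Definition load (p : 'I_m -> 'I_n) (j : 'I_n) : nat :=
  \sum_(i : 'I_m | p i == j) s i.

Definition used (p : 'I_m -> 'I_n) (j : 'I_n) : bool :=
  [exists i : 'I_m, p i == j].

Definition is_packing (p : 'I_m -> 'I_n) : Prop :=
  forall j : 'I_n, load p j <= b j.

Definition cost (p : 'I_m -> 'I_n) : nat :=
  \sum_(j : 'I_n | used p j) b j.

Definition valid (p : 'I_m -> 'I_n) : Prop :=
  is_packing p /\
  forall (j : 'I_n) (i : 'I_m), ~~ used p j -> (j < p i)%N -> b j < s i.

Definition optimal (p : 'I_m -> 'I_n) : Prop :=
  valid p /\ forall q : 'I_m -> 'I_n, valid q -> cost p <= cost q.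

Definition wasteful (p : 'I_m -> 'I_n) (j : 'I_n) : Prop :=
  exists i : 'I_m, (j < p i)%N /\ s i <= b j - load p j.

Definition thrifty (p : 'I_m -> 'I_n) : Prop :=
  forall j : 'I_n, ~ wasteful p j.

End GridScheduling.

(* Start from the optimal packing p and, as long as some bin j is wasteful,
   move an item i that sits in a later bin and fits into the free space of j
   to bin j.  This keeps the packing within capacities, moves items only to
   earlier bins and never opens a bin that p leaves empty (an empty bin of p
   cannot be wasteful: p is valid); the sum of the bin indices of the items
   strictly decreases, so the process stops at a thrifty packing q.  A thrifty
   packing is valid, and since q uses only bins used by p its cost is at most
   that of p; optimality of p and positivity of bin sizes then force q to use
   exactly the bins of p, so q is optimal too. *)

From mathcomp Require Import all_boot.
From mathcomp Require Import zify.
Set Implicit Arguments. Unset Strict Implicit.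

Section Reassignment.
Variables (m n : nat) (s : 'I_m -> nat) (b : 'I_n -> nat).

Definition reassign (q : 'I_m -> 'I_n) (i : 'I_m) (j : 'I_n) : 'I_m -> 'I_n :=
  fun x => if x == i then j else q x.

Lemma load_reassign_other (q : 'I_m -> 'I_n) (i : 'I_m) (j k : 'I_n) :
  k != j -> load s (reassign q i j) k <= load s q k.
Proof.
move=> kj; rewrite /load (big_mkcond (fun x => reassign q i j x == k))
  (big_mkcond (fun x => q x == k)).
apply: leq_sum => x _; rewrite /reassign; case: (x =P i) => // _.
by rewrite eq_sym (negbTE kj).
Qed.

Lemma load_reassign_target (q : 'I_m -> 'I_n) (i : 'I_m) (j : 'I_n) :
  q i != j -> load s (reassign q i j) j = s i + load s q j.
Proof.
move=> qij; rewrite /load (bigD1 i) /=; last by rewrite /reassign eqxx.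
congr (_ + _); apply: eq_bigl => x; rewrite /reassign.
by case: (x =P i) => [->|_]; rewrite ?eqxx ?(negbTE qij) ?andbT.
Qed.

Lemma used_reassign (q : 'I_m -> 'I_n) (i : 'I_m) (j k : 'I_n) :
  used (reassign q i j) k -> (k == j) || used q k.
Proof.
case/existsP=> x; rewrite /reassign; case: (x =P i) => [_ /eqP-> | _ qxk].
  by rewrite eqxx.
by apply/orP; right; apply/existsP; exists x.
Qed.

Definition bin_index_sum (q : 'I_m -> 'I_n) : nat := \sum_(x : 'I_m) q x.

Lemma bin_index_sum_reassign (q : 'I_m -> 'I_n) (i : 'I_m) (j : 'I_n) :
  j < q i -> bin_index_sum (reassign q i j) < bin_index_sum q.
Proof.
move=> ji; rewrite /bin_index_sum (bigD1 i) //= [X in _ < X](bigD1 i) //=.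
rewrite {1}/reassign eqxx (eq_bigr (fun x => nat_of_ord (q x))) ?ltn_add2r //.
by move=> x xi; rewrite /reassign (negbTE xi).
Qed.

Lemma load_unused (q : 'I_m -> 'I_n) (j : 'I_n) : ~~ used q j -> load s q j = 0.
Proof.
move=> uj; rewrite /load big_pred0 // => x; apply/negP => /eqP qxj.
by case/negP: uj; apply/existsP; exists x; rewrite qxj.
Qed.

Lemma wastefulP (q : 'I_m -> 'I_n) (j : 'I_n) :
  reflect (wasteful s b q j) [exists i, (j < q i) && (s i <= b j - load s q j)].
Proof.
apply: (iffP existsP) => [[i /andP[ji sij]] | [i [ji sij]]]; exists i => //.
by rewrite ji sij.
Qed.

Lemma thrifty_valid (q : 'I_m -> 'I_n) : is_packing s b q -> thrifty s b q -> valid s b q.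
Proof.
move=> qP qT; split=> // j i uj ji; rewrite ltnNge; apply/negP => sib.
by apply: (qT j); exists i; rewrite load_unused // subn0.
Qed.

Lemma cost_subset (q r : 'I_m -> 'I_n) :
  (forall k, used q k -> used r k) -> cost b q <= cost b r.
Proof.
move=> qr; rewrite /cost (big_mkcond (used q)) (big_mkcond (used r)).
by apply: leq_sum => k _; case: (boolP (used q k)) => // /qr ->.
Qed.

Lemma used_eq_of_cost_ge (q r : 'I_m -> 'I_n) : (forall j, 0 < b j) ->
  (forall k, used q k -> used r k) -> cost b r <= cost b q ->
  forall j, used q j = used r j.
Proof.
move=> b_pos qr rq j; case: (boolP (used q j)) => [/qr -> //|nqj].
case: (boolP (used r j)) => // rj; exfalso.
have : cost b q + b j <= cost b r.
  rewrite /cost [X in _ <= X](bigD1 j) //= addnC leq_add2l.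
  rewrite (big_mkcond (used q)) (big_mkcond (fun k => used r k && (k != j))).
  apply: leq_sum => k _; case: (boolP (used q k)) => // qk.
  by rewrite qr //=; case: eqP => // kj; move: nqj; rewrite -kj qk.
by have := b_pos j; lia.
Qed.

End Reassignment.

Section Descent.
Variables (m n : nat) (s : 'I_m -> nat) (b : 'I_n -> nat).
Variable p : 'I_m -> 'I_n.
Hypothesis p_valid : valid s b p.

Definition moves_earlier (q : 'I_m -> 'I_n) : Prop :=
  [/\ is_packing s b q, forall x, q x <= p x & forall k, used q k -> used p k].

Lemma moves_earlier_reassign (q : 'I_m -> 'I_n) (i : 'I_m) (j : 'I_n) :
  moves_earlier q -> j < q i -> s i <= b j - load s q j ->
  moves_earlier (reassign q i j).
Proof.
case=> qP qp qU ji sij.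
have pj : used p j.
  apply: contraT => npj.
  have := p_valid.2 j i npj (leq_trans ji (qp i)).
  by have := leq_subr (load s q j) (b j); lia.
have qij : q i != j by apply/eqP => qi; move: ji; rewrite qi ltnn.
split.
- move=> k; case: (eqVneq k j) => [->|kj].
    by rewrite load_reassign_target //; have := qP j; lia.
  exact: leq_trans (load_reassign_other s q i kj) (qP k).
- move=> x; rewrite /reassign; case: (x =P i) => [->|_] //.
  exact: leq_trans (ltnW ji) (qp i).
- by move=> k /used_reassign /orP[/eqP-> | /qU].
Qed.

Lemma moves_earlier_thrifty : exists q, moves_earlier q /\ thrifty s b q.
Proof.
suff: forall N q, moves_earlier q -> bin_index_sum q < N ->
    exists q', moves_earlier q' /\ thrifty s b q'.
  by apply; [split=> //; case: p_valid | exact: ltnSn].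
elim=> // N IH q qI qN.
case: (boolP [exists j : 'I_n, exists i : 'I_m,
                (j < q i) && (s i <= b j - load s q j)]).
  case/existsP=> j /existsP[i /andP[ji sij]].
  apply: IH (moves_earlier_reassign qI ji sij) _.
  by have := bin_index_sum_reassign ji; lia.
move=> nW; exists q; split=> // j /wastefulP Wj.
by case/negP: nW; apply/existsP; exists j.
Qed.

End Descent.

Theorem corollary1 (m n : nat) (s : 'I_m -> nat) (b : 'I_n -> nat)
  (s_pos : forall i, 0 < s i) (b_pos : forall j, 0 < b j)
  (p : 'I_m -> 'I_n) :
  optimal s b p ->
  exists q : 'I_m -> 'I_n,
    [/\ optimal s b q, thrifty s b q & forall j, used q j = used p j].
Proof.
move=> [pV pO].
have [q [[qP _ qU] qT]] := moves_earlier_thrifty pV.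
have qV := thrifty_valid qP qT.
have pq : cost b p <= cost b q := pO q qV.
have Uq := used_eq_of_cost_ge b_pos qU pq.
exists q; split=> //; split=> // r rV.
exact: leq_trans (cost_subset b qU) (pO r rV).
Qed.
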